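(* Let $\mathbf G_n=\mathbf G_n(d,\Omega,k,\Psi,\rho)$ be the Poisson random factor graph and assume $$\lim_{n\to\infty}\frac1{n^2}\sum_{i,j=1}^n\mathbb E\left\|\mu_{\mathbf G_n,x_i,x_j}-\mu_{\mathbf G_n,x_i}\otimes\mu_{\mathbf G_n,x_j}\right\|_{TV}=0 .$$ Then $$\frac1n\mathbb E\sum_{a\in F(\mathbf G_n)}\sum_{\sigma\in\Omega^{\partial a}}\left|\mu_{\mathbf G_n,a}(\sigma)-\frac{\psi_a(\sigma)\prod_{x\in\partial a}\mu_{\mathbf G_n,x\to a}(\sigma(x))}{\sum_{\tau\in\Omega^{\partial a}}\psi_a(\tau)\prod_{x\in\partial a}\mu_{\mathbf G_n,x\to a}(\tau(x))}\right|=o(1)\quad\text{as }n\to\infty.$$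
   Context: Factor graphs: Fix a finite set $\Omega$ of spins. A factor graph $G$ consists of variable nodes $V(G)$, constraint nodes $F(G)$, for each $a\in F(G)$ an ordered tuple $\partial a=(y_1,\ldots,y_{d(a)})$ of variable nodes and a weight function $\psi_a:\Omega^{d(a)}\to(0,\infty)$; for $\sigma\in\Omega^{\partial a}$, $\psi_a(\sigma)=\psi_a(\sigma(y_1),\ldots,\sigma(y_{d(a)}))$. Gibbs measure $\mu_G(\sigma)=Z_G^{-1}\prod_a\psi_a(\sigma(\partial a))$ on $\Omega^{V(G)}$; $\mu_{G,x}$, $\mu_{G,x,y}$ one- and two-point marginals; $\mu_{G,a}$ the joint distribution of the spins of the variables in $\partial a$. For $x\in\partial a$, $\mu_{G,x\to a}$ is the marginal of $x$ in the Gibbs measure of $G-a$ (constraint node $a$ deleted). Poisson random factor graph $\mathbf G_n(d,\Omega,k,\Psi,\rho)$: $d>0$, $k\geq3$, $\Psi$ a finite nonempty set of functions $\Omega^k\to(0,\infty)$, $\rho$ a distribution on $\Psi$, fixed as $n\to\infty$; variable nodes $x_1,\ldots,x_n$, $m\sim\mathrm{Po}(dn/k)$ constraint nodes, each independently with $\psi_{a_i}\sim\rho$ and $\partial a_i$ uniform in $\{x_1,\ldots,x_n\}^k$. *)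

From Stdlib Require Import Reals.
From mathcomp Require Import all_boot.
Set Implicit Arguments. Unset Strict Implicit. Unset Printing Implicit Defensive.
Open Scope R_scope.

Notation cfg Om n := {ffun 'I_n -> Om} (only parsing).

(* A factor graph with n variables and m constraint nodes: constraint i has
   a weight-function label (an element of the index type I of Psi) and an
   ordered k-tuple of variable nodes (its neighbourhood, repetitions allowed). *)
Notation fgraph I k n m :=
  {ffun 'I_m -> (I * {ffun 'I_k -> 'I_n})%type} (only parsing).

Definition loc (Om : finType) (k n : nat) (s : {ffun 'I_n -> Om})
  (v : {ffun 'I_k -> 'I_n}) : {ffun 'I_k -> Om} := [ffun j => s (v j)].

Section Gibbs.
Variables (Om I : finType) (k n m : nat) (psi : I -> {ffun 'I_k -> Om} -> R).
Variable (G : fgraph I k n m).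

(* unnormalised weight using only the constraints i with S i (S = predT: G;
   S = predC1 a : G - a) *)
Definition gweight (S : pred 'I_m) (s : {ffun 'I_n -> Om}) : R :=
  \big[Rmult/1]_(i < m | S i) psi (G i).1 (loc s (G i).2).
Definition Zpart (S : pred 'I_m) : R :=
  \big[Rplus/0]_(s : {ffun 'I_n -> Om}) gweight S s.
Definition gibbs (S : pred 'I_m) (s : {ffun 'I_n -> Om}) : R :=
  gweight S s / Zpart S.

Definition marg1 (S : pred 'I_m) (x : 'I_n) (w : Om) : R :=
  \big[Rplus/0]_(s : {ffun 'I_n -> Om} | s x == w) gibbs S s.
Definition marg2 (S : pred 'I_m) (x y : 'I_n) (w1 w2 : Om) : R :=
  \big[Rplus/0]_(s : {ffun 'I_n -> Om} | (s x == w1) && (s y == w2)) gibbs S s.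
Definition margT (S : pred 'I_m) (v : {ffun 'I_k -> 'I_n}) (t : {ffun 'I_k -> Om}) : R :=
  \big[Rplus/0]_(s : {ffun 'I_n -> Om} | loc s v == t) gibbs S s.

Definition tv_pair (x y : 'I_n) : R :=
  / 2 * \big[Rplus/0]_(w1 : Om) \big[Rplus/0]_(w2 : Om)
     Rabs (marg2 predT x y w1 w2 - marg1 predT x w1 * marg1 predT y w2).

Definition corr : R :=
  / (INR n ^ 2) * \big[Rplus/0]_(x < n) \big[Rplus/0]_(y < n) tv_pair x y.

(* psi_a(t) prod_{positions j} mu_{(partial a)_j -> a}(t_j) *)
Definition bp_num (a : 'I_m) (t : {ffun 'I_k -> Om}) : R :=
  psi (G a).1 t *
  \big[Rmult/1]_(j < k) marg1 (fun i => i != a) ((G a).2 j) (t j).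

Definition bp_err : R :=
  / INR n * \big[Rplus/0]_(a < m) \big[Rplus/0]_(t : {ffun 'I_k -> Om})
     Rabs (margT predT (G a).2 t -
           bp_num a t / \big[Rplus/0]_(t' : {ffun 'I_k -> Om}) bp_num a t').
End Gibbs.

(* Probability of G given m constraints: labels i.i.d. rho, neighbourhoods
   i.i.d. uniform in {x_1..x_n}^k. *)
Definition gprob (I : finType) (k n m : nat) (rho : I -> R) (G : fgraph I k n m) : R :=
  \big[Rmult/1]_(i < m) (rho (G i).1 / INR n ^ k).

Definition cond_exp (I : finType) (k n m : nat) (rho : I -> R)
  (X : fgraph I k n m -> R) : R :=
  \big[Rplus/0]_(G : fgraph I k n m) (gprob rho G * X G).

Definition poisson (lam : R) (m : nat) : R := exp (- lam) * lam ^ m / INR (m`!).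

(* m-th term of E[X(G_n)] with m ~ Po(dn/k); E[X(G_n)] is the sum of the series *)
Definition pterm (I : finType) (d : R) (k : nat) (rho : I -> R)
  (X : forall n m, fgraph I k n m -> R) (n m : nat) : R :=
  poisson (d * INR n / INR k) m * cond_exp rho (X n m).

(* Fix a constraint node a and let mu' be the Gibbs measure of G - a.  The joint law of the
   spins on partial a under mu_G is the mu'-law of these spins reweighted by psi_a, and the BP
   expression is the product of their mu'-marginals reweighted by psi_a.  As psi_a is bounded
   away from 0 and infinity, the error at a is a constant times the total variation distance
   between the joint law and the product of the marginals of a k-tuple of variables under mu'.
   Swapping the coordinates one at a time, each swap costs |E[f (1{s_x = w} - mu'_x(w))]| for
   some f with |f| <= 1 and x the swapped variable; averaged over a uniform x this is at most
   dl + corr / (2 dl^3) for every dl > 0, by AM-GM and because the second moment of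
   sum_x (1{s_x = w} - mu'_x(w)) (1{t_x = w} - mu'_x(w)) is a sum of squared covariances.
   In the Poisson model, G - a for a uniform constraint a is again Poisson distributed
   (m Po(lambda)(m) = lambda Po(lambda)(m-1)), so the expected error is at most
   C (dl + E[corr] / (2 dl^3)); let n go to infinity and then dl to 0. *)

From Pilot Require Import Defs.
From Stdlib Require Import Reals Lra.
From HB Require Import structures.
From mathcomp Require Import all_boot.
Set Implicit Arguments. Unset Strict Implicit. Unset Printing Implicit Defensive.
Open Scope R_scope.

Lemma RplusA : associative Rplus. Proof. by move=> *; rewrite Rplus_assoc. Qed.
Lemma RmultA : associative Rmult. Proof. by move=> *; rewrite Rmult_assoc. Qed.
HB.instance Definition _ := Monoid.isComLaw.Build R 0 Rplus RplusA Rplus_comm Rplus_0_l.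
HB.instance Definition _ := Monoid.isComLaw.Build R 1 Rmult RmultA Rmult_comm Rmult_1_l.
HB.instance Definition _ := Monoid.isMulLaw.Build R 0 Rmult Rmult_0_l Rmult_0_r.
HB.instance Definition _ :=
  Monoid.isAddLaw.Build R Rmult Rplus Rmult_plus_distr_r Rmult_plus_distr_l.

Section RealBigops.
Variable T : finType.
Implicit Types (P Q : pred T) (F G : T -> R).

Lemma ler_sumR P F G :
  (forall i, P i -> F i <= G i) ->
  \big[Rplus/0]_(i | P i) F i <= \big[Rplus/0]_(i | P i) G i.
Proof. by move=> h; apply: (big_ind2 (fun a b => a <= b)) => //; [lra | move=> *; lra]. Qed.

Lemma sumR_ge0 P F : (forall i, P i -> 0 <= F i) -> 0 <= \big[Rplus/0]_(i | P i) F i.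
Proof. by move=> h; apply: (big_ind (fun a => 0 <= a)) => //; [lra | move=> *; lra]. Qed.

Lemma prodR_ge0 P F : (forall i, P i -> 0 <= F i) -> 0 <= \big[Rmult/1]_(i | P i) F i.
Proof. by move=> h; apply: (big_ind (fun a => 0 <= a)) => //; [lra | move=> *; nra]. Qed.

Lemma prodR_gt0 P F : (forall i, P i -> 0 < F i) -> 0 < \big[Rmult/1]_(i | P i) F i.
Proof. by move=> h; apply: (big_ind (fun a => 0 < a)) => //; [lra | move=> *; nra]. Qed.

Lemma prodR_in01 P F :
  (forall i, P i -> 0 <= F i <= 1) -> 0 <= \big[Rmult/1]_(i | P i) F i <= 1.
Proof. by move=> h; apply: (big_ind (fun a => 0 <= a <= 1)) => //; [lra | move=> *; nra]. Qed.

Lemma Rabs_sumR_le P F :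
  Rabs (\big[Rplus/0]_(i | P i) F i) <= \big[Rplus/0]_(i | P i) Rabs (F i).
Proof.
apply: (big_ind2 (fun a b => Rabs a <= b)) => [|a b c d h1 h2|i _]; last lra.
  by rewrite Rabs_R0; lra.
by apply: Rle_trans (Rabs_triang _ _) _; lra.
Qed.

Lemma sumR_const P (c : R) : \big[Rplus/0]_(i | P i) c = INR #|P| * c.
Proof.
rewrite big_const; elim: #|P| => [|n IH]; first by rewrite /=; lra.
by rewrite [iter _ _ _]/= IH S_INR; lra.
Qed.

Lemma ler_sumR_term P F j :
  (forall i, P i -> 0 <= F i) -> P j -> F j <= \big[Rplus/0]_(i | P i) F i.
Proof.
move=> F0 Pj; rewrite (bigD1 j Pj) /=.
suff : 0 <= \big[Rplus/0]_(i | P i && (i != j)) F i by lra.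
by apply: sumR_ge0 => i /andP[/F0].
Qed.

Lemma ler_sumR_subset P Q F :
  (forall i, 0 <= F i) -> (forall i, P i -> Q i) ->
  \big[Rplus/0]_(i | P i) F i <= \big[Rplus/0]_(i | Q i) F i.
Proof.
move=> F0 PQ; rewrite [X in _ <= X](bigID P) /=.
have -> : \big[Rplus/0]_(i | Q i && P i) F i = \big[Rplus/0]_(i | P i) F i.
  by apply: eq_bigl => i; case: (boolP (P i)) => Pi; rewrite ?andbT ?andbF ?PQ.
suff : 0 <= \big[Rplus/0]_(i | Q i && ~~ P i) F i by lra.
exact: sumR_ge0.
Qed.

End RealBigops.

Lemma Rabs_le_AMGM (a c : R) : 0 < c -> Rabs a <= a * a / (2 * c) + c / 2.
Proof.
move=> c0.
have sq : Rabs a * Rabs a = a * a by rewrite -Rabs_mult Rabs_right //; nra.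
have : 0 <= (Rabs a - c) * (Rabs a - c) by apply: Rle_0_sqr.
have -> : a * a / (2 * c) + c / 2 = (a * a + c * c) / (2 * c) by field; lra.
move=> h; apply: (Rmult_le_reg_l (2 * c)); first lra.
have -> : 2 * c * ((a * a + c * c) / (2 * c)) = a * a + c * c by field; lra.
nra.
Qed.

Lemma Rinv_ge0 x : 0 <= x -> 0 <= / x.
Proof.
move=> x0; case: (Req_dec x 0) => [->|x_neq0]; first by rewrite Rinv_0; lra.
by apply: Rlt_le; apply: Rinv_0_lt_compat; lra.
Qed.

Definition indR (b : bool) : R := if b then 1 else 0.

Lemma sumR_indR (S : finType) (P : pred S) (F : S -> R) :
  \big[Rplus/0]_s (F s * indR (P s)) = \big[Rplus/0]_(s | P s) F s.
Proof. by rewrite [RHS]big_mkcond; apply: eq_bigr => s _; rewrite /indR; case: (P s); ring. Qed.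

Lemma sumR_mul_sums (X S : finType) (u : S -> R) (h : X -> S -> R) :
  \big[Rplus/0]_x ((\big[Rplus/0]_s (u s * h x s)) * (\big[Rplus/0]_t (u t * h x t))) =
  \big[Rplus/0]_s \big[Rplus/0]_t (u s * u t * \big[Rplus/0]_x (h x s * h x t)).
Proof.
transitivity (\big[Rplus/0]_x \big[Rplus/0]_s \big[Rplus/0]_t (u s * h x s * (u t * h x t))).
  by apply: eq_bigr => x _; rewrite big_distrl; apply: eq_bigr => s _; rewrite big_distrr.
rewrite exchange_big; apply: eq_bigr => s _; rewrite exchange_big; apply: eq_bigr => t _.
by rewrite big_distrr; apply: eq_bigr => x _ /=; ring.
Qed.

(* For [mu := gibbs psi G predT], [marginal1], [marginal2] and [tv_dist_prod] are [marg1],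
   [marg2] and [tv_pair] of Defs, and [mean_tv] is [corr]. *)
Section Marginals.
Variables (Om : finType) (n : nat) (mu : {ffun 'I_n -> Om} -> R).
Hypothesis mu_ge0 : forall s, 0 <= mu s.
Hypothesis mu_sum1 : \big[Rplus/0]_s mu s = 1.

Definition marginal1 (x : 'I_n) (w : Om) : R :=
  \big[Rplus/0]_(s : {ffun 'I_n -> Om} | s x == w) mu s.
Definition marginal2 (x y : 'I_n) (w1 w2 : Om) : R :=
  \big[Rplus/0]_(s : {ffun 'I_n -> Om} | (s x == w1) && (s y == w2)) mu s.
Definition centred (x : 'I_n) (w : Om) (s : {ffun 'I_n -> Om}) : R :=
  indR (s x == w) - marginal1 x w.
Definition cov (x y : 'I_n) (w : Om) : R := marginal2 x y w w - marginal1 x w * marginal1 y w.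
Definition overlap (w : Om) (s t : {ffun 'I_n -> Om}) : R :=
  \big[Rplus/0]_x (centred x w s * centred x w t).
Definition tv_dist_prod (x y : 'I_n) : R := / 2 * \big[Rplus/0]_w1 \big[Rplus/0]_w2
  Rabs (marginal2 x y w1 w2 - marginal1 x w1 * marginal1 y w2).

Lemma mu_event_in01 (P : pred {ffun 'I_n -> Om}) :
  0 <= \big[Rplus/0]_(s | P s) mu s <= 1.
Proof. by split; [apply: sumR_ge0 | rewrite -mu_sum1; apply: ler_sumR_subset]. Qed.

Lemma marginal1_in01 x w : 0 <= marginal1 x w <= 1. Proof. exact: mu_event_in01. Qed.
Lemma marginal2_in01 x y w1 w2 : 0 <= marginal2 x y w1 w2 <= 1. Proof. exact: mu_event_in01. Qed.

Lemma expect_centred_mul x y w :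
  \big[Rplus/0]_s (mu s * (centred x w s * centred y w s)) = cov x y w.
Proof.
rewrite (eq_bigr (fun s => mu s * indR ((s x == w) && (s y == w))
   + (- marginal1 y w) * (mu s * indR (s x == w))
   + (- marginal1 x w) * (mu s * indR (s y == w))
   + (marginal1 x w * marginal1 y w) * mu s)); last first.
  move=> s _; rewrite /centred.
  have -> : indR ((s x == w) && (s y == w)) = indR (s x == w) * indR (s y == w).
    by rewrite /indR; case: (s x == w); case: (s y == w) => /=; ring.
  ring.
rewrite !big_split /= -!big_distrr /= !sumR_indR mu_sum1.
by rewrite -/(marginal1 x w) -/(marginal1 y w) -/(marginal2 x y w w) /cov; ring.
Qed.

Lemma expect_overlap_sqr w :
  \big[Rplus/0]_s \big[Rplus/0]_t (mu s * mu t * (overlap w s t * overlap w s t)) =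
  \big[Rplus/0]_x \big[Rplus/0]_y (cov x y w * cov x y w).
Proof.
rewrite [RHS]pair_bigA /=.
rewrite (eq_bigr (fun p => (\big[Rplus/0]_s (mu s * (centred p.1 w s * centred p.2 w s)))
   * (\big[Rplus/0]_t (mu t * (centred p.1 w t * centred p.2 w t))))); last first.
  by move=> p _; rewrite expect_centred_mul.
rewrite (sumR_mul_sums mu (fun p s => centred p.1 w s * centred p.2 w s)).
apply: eq_bigr => s _; apply: eq_bigr => t _; congr (_ * _).
rewrite -(pair_bigA _ (fun x y => centred x w s * centred y w s * (centred x w t * centred y w t))).
rewrite /overlap big_distrl /=; apply: eq_bigr => x _.
by rewrite big_distrr /=; apply: eq_bigr => y _; ring.
Qed.

Lemma cov_sqr_le_tv x y w : cov x y w * cov x y w <= 2 * tv_dist_prod x y.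
Proof.
have cov_le1 : Rabs (cov x y w) <= 1.
  have := marginal2_in01 x y w w; have := marginal1_in01 x w; have := marginal1_in01 y w.
  by rewrite /cov => *; apply: Rabs_le; nra.
have cov_sqr : cov x y w * cov x y w <= Rabs (cov x y w).
  by rewrite [X in X <= _]Rsqr_abs /Rsqr; have := Rabs_pos (cov x y w); nra.
apply: Rle_trans cov_sqr _.
rewrite /tv_dist_prod -Rmult_assoc Rinv_r ?Rmult_1_l; last lra.
set D := fun w1 w2 => Rabs (marginal2 x y w1 w2 - marginal1 x w1 * marginal1 y w2).
apply: Rle_trans (_ : \big[Rplus/0]_w2 D w w2 <= _).
  exact: (ler_sumR_term (F := D w)) (fun _ _ => Rabs_pos _) erefl.
apply: (ler_sumR_term (F := fun w1 => \big[Rplus/0]_w2 D w1 w2)) => // w1 _.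
by apply: sumR_ge0 => *; apply: Rabs_pos.
Qed.

Definition mean_tv : R :=
  / (INR n ^ 2) * \big[Rplus/0]_(x < n) \big[Rplus/0]_(y < n) tv_dist_prod x y.

Lemma tv_dist_prod_bounds x y : 0 <= tv_dist_prod x y <= INR #|Om| ^ 2.
Proof.
split; first by apply: Rmult_le_pos; [lra | apply: sumR_ge0 => w1 _; apply: sumR_ge0 => w2 _;
  apply: Rabs_pos].
apply: Rle_trans (_ : / 2 * \big[Rplus/0]_(w1 : Om) \big[Rplus/0]_(w2 : Om) 1 <= _).
  apply: Rmult_le_compat_l; first lra.
  apply: ler_sumR => w1 _; apply: ler_sumR => w2 _.
  have := marginal2_in01 x y w1 w2; have := marginal1_in01 x w1; have := marginal1_in01 y w2.
  by move=> *; apply: Rabs_le; nra.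
rewrite (eq_bigr (fun _ => INR #|Om| * 1)) => [|w1 _]; last by rewrite sumR_const.
rewrite sumR_const; have -> : #|(xpredT : pred Om)| = #|Om| by apply: eq_card.
by have := pos_INR #|Om|; nra.
Qed.

Lemma mean_tv_bounds : 0 <= mean_tv <= INR #|Om| ^ 2.
Proof.
set M := INR #|Om| ^ 2; have M0 : 0 <= M by apply: pow_le; apply: pos_INR.
rewrite /mean_tv; set S := \big[Rplus/0]_(x < n) _.
have S0 : 0 <= S.
  by apply: sumR_ge0 => x _; apply: sumR_ge0 => y _; case: (tv_dist_prod_bounds x y).
have SM : S <= INR n ^ 2 * M.
  apply: Rle_trans (_ : \big[Rplus/0]_(x < n) \big[Rplus/0]_(y < n) M <= _).
    by apply: ler_sumR => x _; apply: ler_sumR => y _; case: (tv_dist_prod_bounds x y).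
  rewrite (eq_bigr (fun _ => INR n * M)) => [|x _]; last by rewrite sumR_const card_ord.
  by rewrite sumR_const card_ord; right; ring.
split; first by apply: Rmult_le_pos => //; apply: Rinv_ge0; apply: pow_le; apply: pos_INR.
case: (Req_dec (INR n ^ 2) 0) => [->|n2_neq0]; first by rewrite Rinv_0; lra.
apply: Rle_trans (Rmult_le_compat_l _ _ _ (Rinv_ge0 (pow_le _ 2 (pos_INR n))) SM) _.
by rewrite -Rmult_assoc Rinv_l // Rmult_1_l; lra.
Qed.

Variable f : {ffun 'I_n -> Om} -> R.
Hypothesis f_le1 : forall s, Rabs (f s) <= 1.

Definition corr_centred (x : 'I_n) (w : Om) : R :=
  \big[Rplus/0]_s (mu s * f s * centred x w s).

(* Apply AM-GM to every overlap [overlap w s t], whose second moment is the sum of squared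
   covariances. *)
Lemma sum_corr_centred_sqr_le w c : 0 < c ->
  \big[Rplus/0]_(x < n) (corr_centred x w * corr_centred x w) <=
  (\big[Rplus/0]_(x < n) \big[Rplus/0]_(y < n) (cov x y w * cov x y w)) / (2 * c) + c / 2.
Proof.
move=> c0.
rewrite /corr_centred (sumR_mul_sums (fun s => mu s * f s) (fun x s => centred x w s)).
rewrite -expect_overlap_sqr.
apply: Rle_trans (_ : \big[Rplus/0]_s \big[Rplus/0]_t
   (mu s * mu t * (overlap w s t * overlap w s t / (2 * c) + c / 2)) <= _).
  apply: ler_sumR => s _; apply: ler_sumR => t _.
  have mu_st : 0 <= mu s * mu t by have := mu_ge0 s; have := mu_ge0 t; nra.
  have fo : f s * f t * overlap w s t <= Rabs (overlap w s t).
    apply: Rle_trans (Rle_abs _) _; rewrite !Rabs_mult.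
    have := f_le1 s; have := f_le1 t; have := Rabs_pos (overlap w s t).
    have := Rabs_pos (f s); have := Rabs_pos (f t) => *.
    have : Rabs (f s) * Rabs (f t) <= 1 by nra.
    nra.
  have := Rmult_le_compat_l _ _ _ mu_st fo.
  have := Rmult_le_compat_l _ _ _ mu_st (Rabs_le_AMGM (overlap w s t) c0).
  rewrite -/(overlap w s t).
  have -> : mu s * f s * (mu t * f t) * overlap w s t =
    mu s * mu t * (f s * f t * overlap w s t) by ring.
  lra.
rewrite (eq_bigr (fun s => / (2 * c) *
    \big[Rplus/0]_t (mu s * mu t * (overlap w s t * overlap w s t)) + (c / 2) * mu s));
  last first.
  move=> s _; rewrite big_distrr /= -[X in _ = _ + X]Rmult_1_r -mu_sum1 !big_distrr -big_split /=.
  by apply: eq_bigr => t _; rewrite /Rdiv; ring.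
by rewrite big_split /= -!big_distrr /= mu_sum1 /Rdiv; lra.
Qed.

Lemma sum_Rabs_corr_centred_le w dl : 0 < dl -> 0 < INR n ->
  \big[Rplus/0]_(x < n) Rabs (corr_centred x w) <=
  INR n * (dl + (\big[Rplus/0]_(x < n) \big[Rplus/0]_(y < n) (cov x y w * cov x y w))
                / (INR n * INR n) / (4 * (dl * dl * dl))).
Proof.
move=> dl0 n0.
set B := \big[Rplus/0]_(x < n) \big[Rplus/0]_(y < n) _.
have B0 : 0 <= B by apply: sumR_ge0 => x _; apply: sumR_ge0 => y _; nra.
have c0 : 0 < dl * dl * INR n by apply: Rmult_lt_0_compat => //; nra.
have hsq := sum_corr_centred_sqr_le w c0.
set S := \big[Rplus/0]_(x < n) _ in hsq.
apply: Rle_trans (_ : \big[Rplus/0]_x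
    (corr_centred x w * corr_centred x w / (2 * dl) + dl / 2) <= _).
  by apply: ler_sumR => x _; apply: Rabs_le_AMGM.
rewrite big_split /= sumR_const card_ord.
rewrite (eq_bigr (fun x => / (2 * dl) * (corr_centred x w * corr_centred x w))); last first.
  by move=> x _; rewrite /Rdiv Rmult_comm.
rewrite -big_distrr /= -/S.
have := Rmult_le_compat_l _ _ _ (Rlt_le _ _ (Rinv_0_lt_compat (2 * dl) ltac:(lra))) hsq.
have -> : / (2 * dl) * (B / (2 * (dl * dl * INR n)) + dl * dl * INR n / 2) =
  INR n * (B / (INR n * INR n) / (4 * (dl * dl * dl))) + INR n * (dl / 4).
  by field; split; lra.
nra.
Qed.

Lemma sum_Rabs_corr_centred_le_tv w dl : 0 < dl -> 0 < INR n ->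
  \big[Rplus/0]_(x < n) Rabs (corr_centred x w) <= INR n * (dl + mean_tv / (2 * (dl * dl * dl))).
Proof.
move=> dl0 n0; apply: Rle_trans (sum_Rabs_corr_centred_le w dl0 n0) _.
apply: Rmult_le_compat_l; first lra.
have cov_tv : \big[Rplus/0]_(x < n) \big[Rplus/0]_(y < n) (cov x y w * cov x y w) <=
    2 * \big[Rplus/0]_(x < n) \big[Rplus/0]_(y < n) tv_dist_prod x y.
  rewrite big_distrr /=; apply: ler_sumR => x _; rewrite big_distrr /=.
  by apply: ler_sumR => y _; apply: cov_sqr_le_tv.
have dl3 : 0 < dl * dl * dl by apply: Rmult_lt_0_compat => //; nra.
apply: Rplus_le_compat_l.
have -> : mean_tv / (2 * (dl * dl * dl)) =
  2 * (\big[Rplus/0]_(x < n) \big[Rplus/0]_(y < n) tv_dist_prod x y) / (INR n * INR n)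
  / (4 * (dl * dl * dl)) by rewrite /mean_tv; field; lra.
apply: Rmult_le_compat_r; first by apply: Rlt_le; apply: Rinv_0_lt_compat; lra.
by apply: Rmult_le_compat_r => //; apply: Rlt_le; apply: Rinv_0_lt_compat; nra.
Qed.

End Marginals.

Lemma INR_expn n k : INR (n ^ k)%N = INR n ^ k.
Proof. by rewrite -pow_INR; congr INR; elim: k => //= k IH; rewrite expnS IH. Qed.

Section Coordinate.
Variables (k n : nat) (j : 'I_k).

Definition set_coord (v : {ffun 'I_k -> 'I_n}) (y : 'I_n) : {ffun 'I_k -> 'I_n} :=
  [ffun i => if i == j then y else v i].

Lemma set_coord_at v y : set_coord v y j = y. Proof. by rewrite ffunE eqxx. Qed.

Lemma set_coord_set_coord v a b : set_coord (set_coord v a) b = set_coord v b.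
Proof. by apply/ffunP => i; rewrite !ffunE; case: (i == j). Qed.

Lemma set_coord_id v : set_coord v (v j) = v.
Proof. by apply/ffunP => i; rewrite !ffunE; case: eqP => // ->. Qed.

Lemma sum_set_coord_fiber (H : {ffun 'I_k -> 'I_n} -> R) y z :
  \big[Rplus/0]_(v : {ffun 'I_k -> 'I_n} | v j == z) H (set_coord v y) =
  \big[Rplus/0]_(v : {ffun 'I_k -> 'I_n} | v j == y) H v.
Proof.
rewrite (reindex_onto (set_coord^~ z) (set_coord^~ y)); last first.
  by move=> v /eqP vj; rewrite set_coord_set_coord -vj set_coord_id.
apply: eq_big => v; last by move=> /andP[_ /eqP ->].
rewrite set_coord_at eqxx /= set_coord_set_coord.
by apply/eqP/eqP => [<-|<-]; [rewrite set_coord_at | rewrite set_coord_id].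
Qed.

Lemma sum_coord_diag_le (F : {ffun 'I_k -> 'I_n} -> 'I_n -> R) (beta : R) :
  0 < INR n ->
  (forall v y x, F (set_coord v y) x = F v x) ->
  (forall v, \big[Rplus/0]_x F v x <= INR n * beta) ->
  \big[Rplus/0]_v F v (v j) <= INR n ^ k * beta.
Proof.
move=> n0 Finv Fsum.
set H := fun v : {ffun 'I_k -> 'I_n} => F v (v j).
have fiber y : \big[Rplus/0]_v H (set_coord v y) =
    INR n * \big[Rplus/0]_(v : {ffun 'I_k -> 'I_n} | v j == y) H v.
  rewrite (partition_big (fun v : {ffun 'I_k -> 'I_n} => v j) predT) //=.
  rewrite (eq_bigr _ (fun z _ => sum_set_coord_fiber H y z)).
  by rewrite sumR_const card_ord.
have total : \big[Rplus/0]_y \big[Rplus/0]_v H (set_coord v y) = INR n * \big[Rplus/0]_v H v.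
  rewrite (eq_bigr _ (fun y _ => fiber y)) -big_distrr /=.
  by rewrite [in RHS](partition_big (fun v : {ffun 'I_k -> 'I_n} => v j) predT).
have bound : \big[Rplus/0]_y \big[Rplus/0]_v H (set_coord v y) <= INR n ^ k * (INR n * beta).
  rewrite exchange_big /= (eq_bigr (fun v => \big[Rplus/0]_y F v y)); last first.
    by move=> v _; apply: eq_bigr => y _; rewrite /H set_coord_at Finv.
  apply: Rle_trans (ler_sumR (fun v _ => Fsum v)) _.
  by rewrite sumR_const card_ffun !card_ord INR_expn; right.
apply: (Rmult_le_reg_l (INR n)) => //.
by rewrite -total; apply: Rle_trans bound _; right; ring.
Qed.

End Coordinate.

Lemma sumR_telescope (T : nat -> R) N : \big[Rplus/0]_(j < N) (T j.+1 - T j) = T N - T 0%N.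
Proof. by elim: N => [|N IH]; rewrite ?big_ord0 ?big_ord_recr /= ?IH; ring. Qed.

Section TupleLaw.
Variables (Om : finType) (n k : nat) (mu : {ffun 'I_n -> Om} -> R).
Hypothesis mu_ge0 : forall s, 0 <= mu s.
Hypothesis mu_sum1 : \big[Rplus/0]_s mu s = 1.
Implicit Types (v : {ffun 'I_k -> 'I_n}) (t : {ffun 'I_k -> Om}).

Definition tuple_law v t : R := \big[Rplus/0]_(s : {ffun 'I_n -> Om} | loc s v == t) mu s.
Definition tuple_prod v t : R := \big[Rmult/1]_(i < k) marginal1 mu (v i) (t i).

(* [hybrid v t j] interpolates between [tuple_prod] ([j = 0]) and [tuple_law] ([j = k]). *)
Definition prefix_match v t (j : nat) (s : {ffun 'I_n -> Om}) : R :=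
  \big[Rmult/1]_(i < k | (i < j)%N) indR (s (v i) == t i).
Definition suffix_prod v t (j : nat) : R :=
  \big[Rmult/1]_(i < k | (j <= i)%N) marginal1 mu (v i) (t i).
Definition hybrid v t (j : nat) : R :=
  (\big[Rplus/0]_s (mu s * prefix_match v t j s)) * suffix_prod v t j.

Lemma prefix_match_in01 v t j s : 0 <= prefix_match v t j s <= 1.
Proof. by apply: prodR_in01 => i _; rewrite /indR; case: (_ == _); lra. Qed.

Lemma suffix_prod_in01 v t j : 0 <= suffix_prod v t j <= 1.
Proof. by apply: prodR_in01 => i _; apply: marginal1_in01. Qed.

Lemma hybrid0 v t : hybrid v t 0 = tuple_prod v t.
Proof.
rewrite /hybrid (eq_bigr mu) ?mu_sum1 ?Rmult_1_l; first exact: eq_bigl.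
by move=> s _; rewrite /prefix_match big_pred0 //; ring.
Qed.

Lemma indR_loc v t s : indR (loc s v == t) = \big[Rmult/1]_(i < k) indR (s (v i) == t i).
Proof.
case: eqP => [<-|neq]; first by rewrite /indR big1 // => i _; rewrite ffunE eqxx.
case: (pickP (fun i => s (v i) != t i)) => [i mismatch|same].
  by rewrite (bigD1 i) //= /indR (negbTE mismatch) Rmult_0_l.
by case: neq; apply/ffunP => i; rewrite ffunE; apply/eqP/negbFE/same.
Qed.

Lemma hybrid_k v t : hybrid v t k = tuple_law v t.
Proof.
rewrite /hybrid /suffix_prod [X in _ * X]big_pred0; last by move=> i; rewrite leqNgt ltn_ord.
rewrite Rmult_1_r /tuple_law -(sumR_indR (fun s => loc s v == t) mu).
apply: eq_bigr => s _; rewrite indR_loc /prefix_match; congr (_ * _).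
by apply: eq_bigl => i; rewrite ltn_ord.
Qed.

Lemma hybrid_succ_sub v t (j : 'I_k) :
  hybrid v t j.+1 - hybrid v t j =
  suffix_prod v t j.+1 * corr_centred mu (prefix_match v t j) (v j) (t j).
Proof.
have prefixS s : prefix_match v t j.+1 s = indR (s (v j) == t j) * prefix_match v t j s.
  rewrite /prefix_match (bigD1 j) ?ltnSn //=; congr (_ * _); apply: eq_bigl => i.
  by rewrite ltnS ltn_neqAle andbC.
have suffixS : suffix_prod v t j = marginal1 mu (v j) (t j) * suffix_prod v t j.+1.
  rewrite /suffix_prod (bigD1 j) ?leqnn //=; congr (_ * _); apply: eq_bigl => i.
  by rewrite ltn_neqAle eq_sym andbC.
rewrite /hybrid suffixS (eq_bigr _ (fun s _ => congr1 (Rmult (mu s)) (prefixS s))).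
rewrite /corr_centred /centred [in RHS](eq_bigr (fun s => mu s * (indR (s (v j) == t j) *
    prefix_match v t j s) + (- marginal1 mu (v j) (t j)) * (mu s * prefix_match v t j s)));
  last by move=> s _; ring.
by rewrite big_split /= -big_distrr /=; ring.
Qed.

Lemma Rabs_tuple_law_sub_prod_le v t :
  Rabs (tuple_law v t - tuple_prod v t) <=
  \big[Rplus/0]_(j < k) Rabs (corr_centred mu (prefix_match v t j) (v j) (t j)).
Proof.
rewrite -hybrid_k -hybrid0 -(sumR_telescope (hybrid v t)).
apply: Rle_trans (Rabs_sumR_le _ _) _.
apply: ler_sumR => j _; rewrite hybrid_succ_sub Rabs_mult.
have [suffix0 suffix1] := suffix_prod_in01 v t j.+1.
rewrite Rabs_right; last lra.
by have := Rabs_pos (corr_centred mu (prefix_match v t j) (v j) (t j)); nra.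
Qed.

(* The [j]-th swap depends on [v j] only through the swapped variable, so summing it over
   [v j] amounts to summing over all variables [x]. *)
Lemma sum_tuple_law_sub_prod_le dl : 0 < dl -> 0 < INR n ->
  / INR n ^ k * \big[Rplus/0]_v \big[Rplus/0]_t Rabs (tuple_law v t - tuple_prod v t) <=
  INR k * INR #|{ffun 'I_k -> Om}| * (dl + mean_tv mu / (2 * (dl * dl * dl))).
Proof.
move=> dl0 n0.
set beta := dl + _.
have nk0 : 0 < INR n ^ k by apply: pow_lt.
apply: (Rmult_le_reg_l (INR n ^ k)) => //.
rewrite -Rmult_assoc Rinv_r ?Rmult_1_l; last lra.
apply: Rle_trans (_ : \big[Rplus/0]_v \big[Rplus/0]_t \big[Rplus/0]_(j < k)
    Rabs (corr_centred mu (prefix_match v t j) (v j) (t j)) <= _).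
  by apply: ler_sumR => v _; apply: ler_sumR => t _; apply: Rabs_tuple_law_sub_prod_le.
rewrite exchange_big /= (eq_bigr (fun t => \big[Rplus/0]_(j < k) \big[Rplus/0]_v
    Rabs (corr_centred mu (prefix_match v t j) (v j) (t j)))); last first.
  by move=> t _; rewrite exchange_big.
rewrite exchange_big /=.
apply: Rle_trans (_ : \big[Rplus/0]_(j < k) \big[Rplus/0]_t (INR n ^ k * beta) <= _); last first.
  rewrite (eq_bigr (fun j => INR #|{ffun 'I_k -> Om}| * (INR n ^ k * beta))); last first.
    by move=> j _; rewrite sumR_const.
  by rewrite sumR_const card_ord; right; ring.
apply: ler_sumR => j _; apply: ler_sumR => t _.
apply: (sum_coord_diag_le (F := fun v x =>
    Rabs (corr_centred mu (prefix_match v t j) x (t j)))) => // [v y x|v].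
  congr Rabs; apply: eq_bigr => s _; congr (_ * _ * _).
  apply: eq_bigr => i lt_ij; rewrite ffunE.
  by rewrite ifN_eq // neq_ltn lt_ij.
apply: sum_Rabs_corr_centred_le_tv => // s.
by have [p0 p1] := prefix_match_in01 v t j s; rewrite Rabs_right; lra.
Qed.

Lemma sum_marginal1 x : \big[Rplus/0]_w marginal1 mu x w = 1.
Proof. by rewrite -mu_sum1 [RHS](partition_big (fun s : {ffun 'I_n -> Om} => s x) predT). Qed.

Lemma sum_tuple_law v : \big[Rplus/0]_t tuple_law v t = 1.
Proof. by rewrite -mu_sum1 [RHS](partition_big (fun s : {ffun 'I_n -> Om} => loc s v) predT). Qed.

Lemma sum_tuple_prod v : \big[Rplus/0]_t tuple_prod v t = 1.
Proof.
rewrite /tuple_prod -(bigA_distr_bigA (fun (i : 'I_k) w => marginal1 mu (v i) w)) /=.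
by rewrite big1 // => i _; rewrite sum_marginal1.
Qed.

Lemma tuple_law_ge0 v t : 0 <= tuple_law v t. Proof. exact: sumR_ge0. Qed.

Lemma tuple_prod_ge0 v t : 0 <= tuple_prod v t.
Proof. by apply: prodR_ge0 => i _; case: (marginal1_in01 mu_ge0 mu_sum1 (v i) (t i)). Qed.

End TupleLaw.

Section Reweight.
Variables (T : finType) (ps : T -> R) (pmin pmax : R).
Hypothesis pmin_gt0 : 0 < pmin.
Hypothesis ps_bounds : forall t, pmin <= ps t <= pmax.

Definition normaliser (nu : T -> R) : R := \big[Rplus/0]_u (ps u * nu u).

Lemma normaliser_ge (nu : T -> R) :
  (forall t, 0 <= nu t) -> \big[Rplus/0]_t nu t = 1 -> pmin <= normaliser nu.
Proof.
move=> nu_ge0 nu_sum1; rewrite -[pmin]Rmult_1_r -nu_sum1 big_distrr /=.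
by apply: ler_sumR => t _; have := ps_bounds t; have := nu_ge0 t; nra.
Qed.

Lemma Rabs_normaliser_sub_le (nu pi : T -> R) :
  Rabs (normaliser pi - normaliser nu) <= pmax * \big[Rplus/0]_t Rabs (nu t - pi t).
Proof.
have -> : normaliser pi - normaliser nu = \big[Rplus/0]_t (ps t * (pi t - nu t)).
  rewrite (eq_bigr (fun t => ps t * pi t + (-1) * (ps t * nu t))); last by move=> t _; ring.
  by rewrite big_split /= -big_distrr /= /normaliser; ring.
apply: Rle_trans (Rabs_sumR_le _ _) _.
rewrite big_distrr /=; apply: ler_sumR => t _.
rewrite Rabs_mult Rabs_minus_sym Rabs_right; last by case: (ps_bounds t) => *; lra.
by have := ps_bounds t; have := Rabs_pos (nu t - pi t); nra.
Qed.

(* Write [ps nu / A - ps pi / B] as [ps (nu - pi) / A + ps pi (B - A) / (A B)]. *)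
Lemma sum_Rabs_reweight_sub_le (nu pi : T -> R) :
  (forall t, 0 <= nu t) -> \big[Rplus/0]_t nu t = 1 ->
  (forall t, 0 <= pi t) -> \big[Rplus/0]_t pi t = 1 ->
  \big[Rplus/0]_t Rabs (ps t * nu t / normaliser nu - ps t * pi t / normaliser pi) <=
  2 * (pmax / pmin) * \big[Rplus/0]_t Rabs (nu t - pi t).
Proof.
move=> nu_ge0 nu_sum1 pi_ge0 pi_sum1.
have A_ge := normaliser_ge nu_ge0 nu_sum1; have B_ge := normaliser_ge pi_ge0 pi_sum1.
have BA_le := Rabs_normaliser_sub_le nu pi.
set A := normaliser nu in A_ge BA_le *; set B := normaliser pi in B_ge BA_le *.
set D := \big[Rplus/0]_t Rabs (nu t - pi t) in BA_le *.
have D_ge0 : 0 <= D by apply: sumR_ge0 => t _; apply: Rabs_pos.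
apply: Rle_trans (_ : \big[Rplus/0]_t
    (pmax / pmin * Rabs (nu t - pi t) + Rabs (B - A) / (A * B) * (ps t * pi t)) <= _).
  apply: ler_sumR => t _.
  have [ps_ge ps_le] := ps_bounds t; have := pi_ge0 t => pi_t.
  have -> : ps t * nu t / A - ps t * pi t / B =
      ps t / A * (nu t - pi t) + (B - A) / (A * B) * (ps t * pi t) by field; lra.
  have ratio_le : ps t / A <= pmax / pmin.
    apply: Rmult_le_compat => //; [lra | by apply: Rinv_ge0; lra | exact: Rinv_le_contravar].
  have first_le : Rabs (ps t / A * (nu t - pi t)) <= pmax / pmin * Rabs (nu t - pi t).
    rewrite Rabs_mult Rabs_right; last first.
      by apply: Rle_ge; apply: Rmult_le_pos; [lra | apply: Rinv_ge0; lra].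
    by apply: Rmult_le_compat_r => //; apply: Rabs_pos.
  have second_eq : Rabs ((B - A) / (A * B) * (ps t * pi t)) =
      Rabs (B - A) / (A * B) * (ps t * pi t).
    rewrite Rabs_mult (Rabs_right (ps t * pi t)); last by apply: Rle_ge; nra.
    by rewrite Rabs_mult (Rabs_right (/ (A * B))) //; apply: Rle_ge; apply: Rinv_ge0; nra.
  by have := Rabs_triang (ps t / A * (nu t - pi t)) ((B - A) / (A * B) * (ps t * pi t)); lra.
rewrite big_split /= -!big_distrr /= -/D -/(normaliser pi) -/B.
have -> : Rabs (B - A) / (A * B) * B = Rabs (B - A) / A by field; lra.
have : Rabs (B - A) / A <= pmax * D / pmin.
  apply: Rle_trans (_ : Rabs (B - A) / pmin <= _).
    by apply: Rmult_le_compat_l; [apply: Rabs_pos | apply: Rinv_le_contravar].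
  by apply: Rmult_le_compat_r => //; apply: Rinv_ge0; lra.
have -> : 2 * (pmax / pmin) * D = pmax / pmin * D + pmax * D / pmin by field; lra.
lra.
Qed.

End Reweight.

Section GibbsDeletion.
Variables (Om I : finType) (k n : nat) (psi : I -> {ffun 'I_k -> Om} -> R).
Hypothesis psi_gt0 : forall l t, 0 < psi l t.
Variable w0 : Om.
Local Notation C := (I * {ffun 'I_k -> 'I_n})%type.

Lemma gweight_gt0 m (G : {ffun 'I_m -> C}) S s : 0 < gweight psi G S s.
Proof. exact: prodR_gt0. Qed.

Lemma Zpart_gt0 m (G : {ffun 'I_m -> C}) S : 0 < Zpart psi G S.
Proof.
apply: Rlt_le_trans (gweight_gt0 G S [ffun _ => w0]) _.
by apply: (ler_sumR_term (F := gweight psi G S)) => // s _; apply: Rlt_le; apply: gweight_gt0.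
Qed.

Lemma gibbs_ge0 m (G : {ffun 'I_m -> C}) S s : 0 <= gibbs psi G S s.
Proof.
apply: Rmult_le_pos; first exact: Rlt_le (gweight_gt0 _ _ _).
exact: Rlt_le (Rinv_0_lt_compat _ (Zpart_gt0 _ _)).
Qed.

Lemma gibbs_sum1 m (G : {ffun 'I_m -> C}) S : \big[Rplus/0]_s gibbs psi G S s = 1.
Proof.
rewrite /gibbs /Rdiv -big_distrl /= -/(Zpart psi G S).
by apply: Rinv_r; apply: Rgt_not_eq; apply: Zpart_gt0.
Qed.

Definition del_constraint m (G : {ffun 'I_m.+1 -> C}) (a : 'I_m.+1) : {ffun 'I_m -> C} :=
  [ffun i => G (lift a i)].

Definition bp_local_err m (G : {ffun 'I_m -> C}) (a : 'I_m) : R :=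
  \big[Rplus/0]_t Rabs (margT psi G predT (G a).2 t -
                        bp_num psi G a t / \big[Rplus/0]_u bp_num psi G a u).

Variables (m : nat) (G : {ffun 'I_m.+1 -> C}) (a : 'I_m.+1).
Let v := (G a).2.
Let ps := psi (G a).1.
Let mu' := gibbs psi (del_constraint G a) predT.

Lemma gweight_split s :
  gweight psi G predT s = ps (loc s v) * gweight psi (del_constraint G a) predT s.
Proof.
by rewrite /gweight (bigD1_ord a) //=; congr (_ * _); apply: eq_bigr => i _; rewrite ffunE.
Qed.

Lemma gweight_del s :
  gweight psi G (fun i => i != a) s = gweight psi (del_constraint G a) predT s.
Proof.
have := gweight_split s; rewrite /gweight (bigD1 a) //= => split_a.
by apply: (Rmult_eq_reg_l (ps (loc s v))); [rewrite -split_a | apply: Rgt_not_eq; apply: psi_gt0].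
Qed.

Lemma gibbs_del s : gibbs psi G (fun i => i != a) s = mu' s.
Proof. by rewrite /mu' /gibbs /Zpart gweight_del (eq_bigr _ (fun s _ => gweight_del s)). Qed.

Lemma bp_num_del t : bp_num psi G a t = ps t * tuple_prod mu' v t.
Proof.
rewrite /bp_num /tuple_prod; congr (_ * _); apply: eq_bigr => i _.
by apply: eq_bigr => s _; rewrite gibbs_del.
Qed.

Lemma margT_reweight t :
  margT psi G predT v t = ps t * tuple_law mu' v t / normaliser ps (tuple_law mu' v).
Proof.
set W := gweight psi (del_constraint G a) predT.
set Z' := Zpart psi (del_constraint G a) predT.
have Z'_gt0 : 0 < Z' by apply: Zpart_gt0.
set N := fun u => \big[Rplus/0]_(s : {ffun 'I_n -> Om} | loc s v == u) W s.
have law_N u : tuple_law mu' v u = N u / Z' by rewrite /tuple_law /N /Rdiv big_distrl.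
have Z_N : Zpart psi G predT = \big[Rplus/0]_u (ps u * N u).
  rewrite /Zpart (partition_big (fun s : {ffun 'I_n -> Om} => loc s v) predT) //=.
  apply: eq_bigr => u _; rewrite /N big_distrr /=; apply: eq_bigr => s /eqP loc_s.
  by rewrite gweight_split loc_s.
have margT_N : margT psi G predT v t = ps t * N t / Zpart psi G predT.
  rewrite /margT /N /Rdiv big_distrr /= big_distrl /=; apply: eq_bigr => s /eqP loc_s.
  by rewrite /gibbs gweight_split loc_s.
have Z_gt0 := Zpart_gt0 G predT; rewrite Z_N in Z_gt0.
rewrite margT_N Z_N /normaliser.
rewrite [in RHS](eq_bigr (fun u => / Z' * (ps u * N u))); last first.
  by move=> u _; rewrite law_N /Rdiv; ring.
rewrite -big_distrr /= law_N.
set S := \big[Rplus/0]_u _ in Z_gt0 *.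
by rewrite -/S; field; split; lra.
Qed.

Lemma bp_local_err_le pmin pmax :
  0 < pmin -> (forall t, pmin <= ps t <= pmax) ->
  bp_local_err G a <=
  2 * (pmax / pmin) * \big[Rplus/0]_t Rabs (tuple_law mu' v t - tuple_prod mu' v t).
Proof.
move=> pmin_gt0 ps_bounds.
have mu'_ge0 s : 0 <= mu' s by apply: gibbs_ge0.
have mu'_sum1 : \big[Rplus/0]_s mu' s = 1 by apply: gibbs_sum1.
apply: Rle_trans (sum_Rabs_reweight_sub_le pmin_gt0 ps_bounds _ _ _ _) => //.
- right; apply: eq_bigr => t _; rewrite margT_reweight bp_num_del.
  by rewrite (eq_bigr _ (fun u _ => bp_num_del u)).
- exact: tuple_law_ge0.
- exact: sum_tuple_law.
- exact: tuple_prod_ge0.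
- exact: sum_tuple_prod.
Qed.

End GibbsDeletion.

Section ConstraintLaw.
Variables (I : finType) (k n : nat) (rho : I -> R).
Hypothesis rho_ge0 : forall l, 0 <= rho l.
Hypothesis rho_sum1 : \big[Rplus/0]_l rho l = 1.
Local Notation C := (I * {ffun 'I_k -> 'I_n})%type.

Definition ins_constraint m (a : 'I_m.+1) (c : C) (G' : {ffun 'I_m -> C}) : {ffun 'I_m.+1 -> C} :=
  [ffun i => if unlift a i is Some i' then G' i' else c].

Lemma ins_constraint_at m (a : 'I_m.+1) c G' : ins_constraint a c G' a = c.
Proof. by rewrite ffunE unlift_none. Qed.

Lemma del_ins_constraint m (a : 'I_m.+1) c G' : del_constraint (ins_constraint a c G') a = G'.
Proof. by apply/ffunP => i; rewrite !ffunE liftK. Qed.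

Lemma ins_del_constraint m (a : 'I_m.+1) (G : {ffun 'I_m.+1 -> C}) :
  ins_constraint a (G a) (del_constraint G a) = G.
Proof. by apply/ffunP => i; rewrite ffunE; case: unliftP => [j ->|->] //; rewrite ffunE. Qed.

Lemma sumR_ins_constraint m (a : 'I_m.+1) (F : {ffun 'I_m.+1 -> C} -> R) :
  \big[Rplus/0]_G F G =
  \big[Rplus/0]_(c : C) \big[Rplus/0]_(G' : {ffun 'I_m -> C}) F (ins_constraint a c G').
Proof.
rewrite pair_bigA /= (reindex (fun p : C * {ffun 'I_m -> C} => ins_constraint a p.1 p.2)) //.
exists (fun G : {ffun 'I_m.+1 -> C} => (G a, del_constraint G a)) => [[c G'] _|G _] /=.
  by rewrite ins_constraint_at del_ins_constraint.
by rewrite ins_del_constraint.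
Qed.

Lemma gprob_ins_constraint m (a : 'I_m.+1) c G' :
  gprob rho (ins_constraint a c G') = rho c.1 / INR n ^ k * gprob rho G'.
Proof.
rewrite /gprob (bigD1_ord a) //= ins_constraint_at; congr (_ * _).
by apply: eq_bigr => i _; rewrite ffunE liftK.
Qed.

Lemma sumR_constraint_law (F : {ffun 'I_k -> 'I_n} -> R) :
  \big[Rplus/0]_(c : C) (rho c.1 / INR n ^ k * F c.2) = / INR n ^ k * \big[Rplus/0]_v F v.
Proof.
rewrite -(pair_bigA _ (fun l v => rho l / INR n ^ k * F v)) /=.
rewrite (eq_bigr (fun l => rho l * (/ INR n ^ k * \big[Rplus/0]_v F v))); last first.
  by move=> l _; rewrite !big_distrr /=; apply: eq_bigr => v _; rewrite /Rdiv; ring.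
by rewrite -big_distrl /= rho_sum1 Rmult_1_l.
Qed.

Lemma cond_exp_ins_constraint m (a : 'I_m.+1) (F : {ffun 'I_m.+1 -> C} -> R) :
  cond_exp rho F = \big[Rplus/0]_(G' : {ffun 'I_m -> C})
    (gprob rho G' * \big[Rplus/0]_(c : C) (rho c.1 / INR n ^ k * F (ins_constraint a c G'))).
Proof.
rewrite /cond_exp (sumR_ins_constraint a) exchange_big /=; apply: eq_bigr => G' _.
by rewrite big_distrr /=; apply: eq_bigr => c _; rewrite gprob_ins_constraint; ring.
Qed.

Lemma gprob_ge0 m (G : {ffun 'I_m -> C}) : 0 <= gprob rho G.
Proof.
apply: prodR_ge0 => i _; apply: Rmult_le_pos => //.
by apply: Rinv_ge0; apply: pow_le; apply: pos_INR.
Qed.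

(* [n ^ k / n ^ k] is [1], or [0] in the degenerate case [n = 0 < k]. *)
Lemma sum_gprob m :
  \big[Rplus/0]_(G : {ffun 'I_m -> C}) gprob rho G = (INR n ^ k / INR n ^ k) ^ m.
Proof.
elim: m => [|m IH].
  rewrite (eq_bigr (fun _ => 1)) => [|G _]; last by rewrite /gprob big_ord0.
  by rewrite sumR_const card_ffun card_ord /=; ring.
rewrite (sumR_ins_constraint ord0).
rewrite (eq_bigr (fun c => rho c.1 / INR n ^ k * (INR n ^ k / INR n ^ k) ^ m)); last first.
  move=> c _; rewrite -IH big_distrr /=.
  by apply: eq_bigr => G' _; rewrite gprob_ins_constraint.
rewrite (sumR_constraint_law (fun _ => (INR n ^ k / INR n ^ k) ^ m)) sumR_const card_ffun.
by rewrite !card_ord INR_expn /=; rewrite /Rdiv; ring.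
Qed.

Lemma sum_gprob_le1 m : \big[Rplus/0]_(G : {ffun 'I_m -> C}) gprob rho G <= 1.
Proof.
rewrite sum_gprob -(pow1 m); apply: pow_incr; rewrite /Rdiv.
case: (Req_dec (INR n ^ k) 0) => [->|nk_neq0]; first by rewrite Rmult_0_l; lra.
by rewrite Rinv_r //; lra.
Qed.

Lemma sum_gprob1 m : 0 < INR n -> \big[Rplus/0]_(G : {ffun 'I_m -> C}) gprob rho G = 1.
Proof. by move=> n0; rewrite sum_gprob /Rdiv Rinv_r ?pow1 //; apply: pow_nonzero; lra. Qed.

End ConstraintLaw.

Section RandomGraphBP.
Variables (Om I : finType) (k n : nat) (psi : I -> {ffun 'I_k -> Om} -> R) (rho : I -> R).
Hypothesis rho_ge0 : forall l, 0 <= rho l.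
Hypothesis rho_sum1 : \big[Rplus/0]_l rho l = 1.
Hypothesis psi_gt0 : forall l t, 0 < psi l t.
Variables (w0 : Om) (pmin pmax : R).
Hypothesis pmin_gt0 : 0 < pmin.
Hypothesis pmin_le_pmax : pmin <= pmax.
Hypothesis psi_bounds : forall l t, pmin <= psi l t <= pmax.
Hypothesis n_gt0 : 0 < INR n.
Local Notation C := (I * {ffun 'I_k -> 'I_n})%type.

Definition bp_const : R := 2 * (pmax / pmin) * (INR k * INR #|{ffun 'I_k -> Om}|).

Lemma bp_const_ge0 : 0 <= bp_const.
Proof.
apply: Rmult_le_pos; last by apply: Rmult_le_pos; apply: pos_INR.
by apply: Rmult_le_pos; [lra | apply: Rmult_le_pos; [lra | apply: Rinv_ge0; lra]].
Qed.

Lemma sum_ins_local_err_le m (a : 'I_m.+1) (G' : {ffun 'I_m -> C}) dl : 0 < dl ->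
  \big[Rplus/0]_(c : C) (rho c.1 / INR n ^ k * bp_local_err psi (ins_constraint a c G') a) <=
  bp_const * (dl + corr psi G' / (2 * (dl * dl * dl))).
Proof.
move=> dl0.
have ratio0 : 0 <= 2 * (pmax / pmin).
  by apply: Rmult_le_pos; [lra | apply: Rmult_le_pos; [lra | apply: Rinv_ge0; lra]].
set mu' := gibbs psi G' predT.
have mu'_ge0 s : 0 <= mu' s by apply: gibbs_ge0.
have mu'_sum1 : \big[Rplus/0]_s mu' s = 1 by apply: gibbs_sum1.
apply: Rle_trans (_ : \big[Rplus/0]_(c : C) (rho c.1 / INR n ^ k * (2 * (pmax / pmin) *
    \big[Rplus/0]_t Rabs (tuple_law mu' c.2 t - tuple_prod mu' c.2 t))) <= _).
  apply: ler_sumR => c _; apply: Rmult_le_compat_l.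
    by apply: Rmult_le_pos => //; apply: Rinv_ge0; apply: pow_le; lra.
  have := bp_local_err_le psi_gt0 w0 (G := ins_constraint a c G') (a := a) pmin_gt0
    (fun t => psi_bounds _ t).
  by rewrite ins_constraint_at del_ins_constraint.
rewrite (sumR_constraint_law rho_sum1 (fun v => 2 * (pmax / pmin) *
    \big[Rplus/0]_t Rabs (tuple_law mu' v t - tuple_prod mu' v t))) -big_distrr /=.
have := Rmult_le_compat_l _ _ _ ratio0 (sum_tuple_law_sub_prod_le k mu'_ge0 mu'_sum1 dl0 n_gt0).
change (mean_tv mu') with (corr psi G') => h.
set S := \big[Rplus/0]_v _ in h; rewrite -/S.
rewrite /bp_const Rmult_comm Rmult_assoc (Rmult_comm S).
by apply: Rle_trans h _; right; ring.
Qed.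

Lemma cond_exp_local_err_le m (a : 'I_m.+1) dl : 0 < dl ->
  cond_exp rho (fun G : {ffun 'I_m.+1 -> C} => bp_local_err psi G a) <=
  bp_const * (dl + cond_exp rho (fun G' : {ffun 'I_m -> C} => corr psi G') / (2 * (dl * dl * dl))).
Proof.
move=> dl0.
have dl3 : 0 < 2 * (dl * dl * dl).
  by apply: Rmult_lt_0_compat; [lra | apply: Rmult_lt_0_compat; nra].
rewrite (cond_exp_ins_constraint _ a).
apply: Rle_trans (ler_sumR (fun G' _ => Rmult_le_compat_l _ _ _ (gprob_ge0 rho_ge0 G')
  (sum_ins_local_err_le a G' dl0))) _.
right; rewrite /cond_exp (eq_bigr (fun G' => bp_const * dl * gprob rho G' +
  bp_const / (2 * (dl * dl * dl)) * (gprob rho G' * corr psi G'))); last first.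
  by move=> G' _; field; lra.
by rewrite big_split /= -!big_distrr /= sum_gprob1 //; field; lra.
Qed.

Lemma cond_exp_bp_err_le m dl : 0 < dl ->
  cond_exp rho (fun G : {ffun 'I_m.+1 -> C} => bp_err psi G) <=
  INR m.+1 / INR n * bp_const *
  (dl + cond_exp rho (fun G' : {ffun 'I_m -> C} => corr psi G') / (2 * (dl * dl * dl))).
Proof.
move=> dl0.
have -> : cond_exp rho (fun G : {ffun 'I_m.+1 -> C} => bp_err psi G) =
    / INR n * \big[Rplus/0]_(a < m.+1)
      cond_exp rho (fun G : {ffun 'I_m.+1 -> C} => bp_local_err psi G a).
  rewrite /cond_exp exchange_big big_distrr /=; apply: eq_bigr => G _.
  change (bp_err psi G) with (/ INR n * \big[Rplus/0]_(a < m.+1) bp_local_err psi G a).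
  by rewrite -big_distrr /=; ring.
apply: Rle_trans (Rmult_le_compat_l _ _ _ (Rinv_ge0 (Rlt_le _ _ n_gt0))
  (ler_sumR (fun a _ => cond_exp_local_err_le a dl0))) _.
by rewrite sumR_const card_ord; right; rewrite /Rdiv; ring.
Qed.

End RandomGraphBP.

Lemma Un_cv_const (c : R) : Un_cv (fun _ => c) c.
Proof. by move=> eps eps0; exists 0%nat => *; rewrite /R_dist Rminus_diag Rabs_R0. Qed.

Lemma Un_cv_ext (u v : nat -> R) l : (forall N, u N = v N) -> Un_cv u l -> Un_cv v l.
Proof. by move=> uv ul eps eps0; have [N hN] := ul eps eps0; exists N => N' /hN; rewrite uv. Qed.

Lemma infinite_sum_scal (f : nat -> R) c l :
  infinite_sum f l -> infinite_sum (fun m => c * f m) (c * l).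
Proof.
move=> fl; apply: Un_cv_ext (CV_mult _ _ _ _ (Un_cv_const c) fl) => N.
by rewrite scal_sum; apply: PartSum.sum_eq => i _; ring.
Qed.

Lemma infinite_sum_plus (f g : nat -> R) lf lg :
  infinite_sum f lf -> infinite_sum g lg -> infinite_sum (fun m => f m + g m) (lf + lg).
Proof. by move=> fl gl; apply: Un_cv_ext (CV_plus _ _ _ _ fl gl) => N; rewrite plus_sum. Qed.

Lemma infinite_sum_le (f : nat -> R) l B :
  infinite_sum f l -> (forall N, sum_f_R0 f N <= B) -> l <= B.
Proof. by move=> fl le_B; apply: Rle_cv_lim le_B fl (Un_cv_const B). Qed.

Lemma infinite_sum_ge0 (f : nat -> R) l : infinite_sum f l -> (forall m, 0 <= f m) -> 0 <= l.
Proof.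
move=> fl f_ge0; apply: Rle_cv_lim _ (Un_cv_const 0) fl => N.
by elim: N => [|N IH] /=; [exact: f_ge0 | have := f_ge0 N.+1; lra].
Qed.

Lemma infinite_sum_le_shift (f g : nat -> R) lf lg :
  infinite_sum f lf -> infinite_sum g lg ->
  f 0%nat = 0 -> (forall m, f m.+1 <= g m) -> (forall m, 0 <= g m) -> lf <= lg.
Proof.
move=> fl gl f0 fg g_ge0; apply: (infinite_sum_le fl) => N.
have g_le m : sum_f_R0 g m <= lg by apply: sum_incr.
case: N => [|N] /=; first by have := g_le 0%nat; have := g_ge0 0%nat; rewrite f0 /=; lra.
apply: Rle_trans (g_le N); elim: N => [|N IH] /=; first by have := fg 0%nat; lra.
by move: IH => /=; have := fg N.+1; lra.
Qed.

Lemma INR_factorial m : INR (m`!) = INR (Factorial.fact m).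
Proof. by elim: m => [//|m IH]; rewrite factS fact_simpl !mult_INR -IH. Qed.

Lemma poisson_ge0 l m : 0 <= l -> 0 <= poisson l m.
Proof.
move=> l0; apply: Rmult_le_pos.
  by apply: Rmult_le_pos; [apply: Rlt_le; apply: exp_pos | apply: pow_le].
by apply: Rinv_ge0; apply: pos_INR.
Qed.

Lemma poisson_succ l m : poisson l m.+1 * INR m.+1 = l * poisson l m.
Proof.
rewrite /poisson !INR_factorial fact_simpl mult_INR [l ^ m.+1]/=.
have := INR_fact_lt_0 m; have : 0 < INR m.+1 by apply: lt_0_INR; apply/ltP.
by move=> *; field; split; lra.
Qed.

Lemma infinite_sum_poisson l : infinite_sum (poisson l) 1.
Proof.
have := infinite_sum_scal (exp (- l)) (proj2_sig (exist_exp l)).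
rewrite -/(exp l) -exp_plus Rplus_opp_l exp_0.
apply: Un_cv_ext => N; apply: PartSum.sum_eq => i _.
by rewrite /poisson INR_factorial /Rdiv; ring.
Qed.

(* Pick [dl] small first, then [n] large. *)
Lemma Un_cv0_of_param_bound (e c : nat -> R) A : 0 <= A -> Un_cv c 0 ->
  (forall n, 0 <= e n) ->
  (forall n dl, (0 < n)%N -> 0 < dl -> e n <= A * (dl + c n / (2 * (dl * dl * dl)))) ->
  Un_cv e 0.
Proof.
move=> A0 c0 e_ge0 e_le eps eps0.
set dl := eps / (2 * (A + 1)).
have dl0 : 0 < dl by apply: Rdiv_lt_0_compat; lra.
have Adl : A * dl < eps / 2.
  have -> : A * dl = eps / 2 * (A / (A + 1)) by rewrite /dl; field; lra.
  suff : A / (A + 1) < 1 by nra.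
  by apply: (Rmult_lt_reg_r (A + 1)); [lra | rewrite /Rdiv Rmult_assoc Rinv_l; lra].
have dl3 : 0 < 2 * (dl * dl * dl).
  by apply: Rmult_lt_0_compat; [lra | apply: Rmult_lt_0_compat; nra].
set B := A / (2 * (dl * dl * dl)).
have B0 : 0 <= B by apply: Rmult_le_pos => //; apply: Rinv_ge0; lra.
have [N cN] := c0 (eps / (2 * (B + 1))) ltac:(apply: Rdiv_lt_0_compat; lra).
exists (maxn N 1) => n /leP; rewrite geq_max => /andP[/leP nN n0].
have := cN n nN; rewrite /R_dist Rminus_0_r => c_small.
have Bc : B * c n < eps / 2.
  have : B * c n <= (B + 1) * Rabs (c n) by have := Rle_abs (c n); have := Rabs_pos (c n); nra.
  have -> : eps / 2 = (B + 1) * (eps / (2 * (B + 1))) by field; lra.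
  by move=> h; apply: Rle_lt_trans h _; apply: Rmult_lt_compat_l; lra.
have := e_le n dl n0 dl0; rewrite /R_dist Rminus_0_r Rabs_right; last exact: Rle_ge.
have -> : A * (dl + c n / (2 * (dl * dl * dl))) = A * dl + B * c n by rewrite /B; field; lra.
lra.
Qed.

Lemma pos_fun_bounds (T : finType) (f : T -> R) : (forall t, 0 < f t) ->
  exists pmin pmax, [/\ 0 < pmin, pmin <= pmax & forall t, pmin <= f t <= pmax].
Proof.
move=> f_gt0.
have inv_sum0 : 0 <= \big[Rplus/0]_t / f t.
  by apply: sumR_ge0 => t _; apply: Rlt_le; apply: Rinv_0_lt_compat.
have sum0 : 0 <= \big[Rplus/0]_t f t by apply: sumR_ge0 => t _; apply: Rlt_le.
exists (/ (1 + \big[Rplus/0]_t / f t)), (1 + \big[Rplus/0]_t f t); split.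
- by apply: Rinv_0_lt_compat; lra.
- by apply: Rle_trans (_ : 1 <= _); [rewrite -Rinv_1; apply: Rinv_le_contravar | ]; lra.
move=> t; split.
  rewrite -[f t]Rinv_inv; apply: Rinv_le_contravar; first exact: Rinv_0_lt_compat.
  suff : / f t <= \big[Rplus/0]_t / f t by lra.
  by apply: (ler_sumR_term (F := fun t => / f t)) => // u _; apply: Rlt_le; apply: Rinv_0_lt_compat.
suff : f t <= \big[Rplus/0]_t f t by lra.
by apply: ler_sumR_term => // u _; apply: Rlt_le.
Qed.

Section PoissonFactorGraph.
Variables (Om I : finType) (k : nat) (d : R) (psi : I -> {ffun 'I_k -> Om} -> R) (rho : I -> R).
Hypothesis k_gt0 : (0 < k)%N.
Hypothesis d_gt0 : 0 < d.
Hypothesis psi_gt0 : forall l t, 0 < psi l t.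
Hypothesis rho_ge0 : forall l, 0 <= rho l.
Hypothesis rho_sum1 : \big[Rplus/0]_l rho l = 1.
Local Notation corr_term := (pterm d rho (fun n m G => corr psi G)).
Local Notation bp_term := (pterm d rho (fun n m G => bp_err psi G)).
Local Notation lambda n := (d * INR n / INR k).
Local Notation graph n m := {ffun 'I_m -> I * {ffun 'I_k -> 'I_n}}.

Lemma lambda_ge0 n : 0 <= lambda n.
Proof.
apply: Rmult_le_pos; first by apply: Rmult_le_pos; [lra | apply: pos_INR].
by apply: Rinv_ge0; apply: pos_INR.
Qed.

Lemma bp_err_ge0 (n m : nat) (G : graph n m) : 0 <= bp_err psi G.
Proof.
apply: Rmult_le_pos; first by apply: Rinv_ge0; apply: pos_INR.
by apply: sumR_ge0 => a _; apply: sumR_ge0 => t _; apply: Rabs_pos.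
Qed.

Lemma bp_term_ge0 n m : 0 <= bp_term n m.
Proof.
apply: Rmult_le_pos; first exact: poisson_ge0 (lambda_ge0 n).
by apply: sumR_ge0 => G _; apply: Rmult_le_pos; [apply: gprob_ge0 | apply: bp_err_ge0].
Qed.

Lemma bp_term0 n : bp_term n 0 = 0.
Proof.
rewrite /pterm /cond_exp big1 ?Rmult_0_r // => G _.
by rewrite /bp_err big_ord0; ring.
Qed.

Lemma bp_term_eq0_of_empty : #|Om| = 0%N -> forall n m, bp_term n m = 0.
Proof.
move=> Om_empty n m; rewrite /pterm /cond_exp big1 ?Rmult_0_r // => G _.
rewrite /bp_err big1 ?Rmult_0_r // => a _; rewrite big1 // => t _.
by move: (t (Ordinal k_gt0)) => w; move: (card0_eq Om_empty w).
Qed.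

Lemma bp_series_eq0_of_empty n l : #|Om| = 0%N -> infinite_sum (bp_term n) l -> l = 0.
Proof.
move=> Om_empty bp_sum; apply: uniqueness_sum bp_sum _.
apply: Un_cv_ext (Un_cv_const 0) => N; rewrite (PartSum.sum_eq _ (fun _ => 0)).
  by rewrite sum_cte Rmult_0_l.
by move=> m _; rewrite bp_term_eq0_of_empty.
Qed.

Variable w0 : Om.

Lemma cond_exp_corr_bounds (n m : nat) :
  0 <= cond_exp rho (fun G : graph n m => corr psi G) <= INR #|Om| ^ 2.
Proof.
have corr_bounds (G : graph n m) : 0 <= corr psi G <= INR #|Om| ^ 2.
  exact: mean_tv_bounds (gibbs_ge0 psi_gt0 w0 G predT) (gibbs_sum1 psi_gt0 w0 G predT).
have M0 : 0 <= INR #|Om| ^ 2 by apply: pow_le; apply: pos_INR.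
split.
  by apply: sumR_ge0 => G _; apply: Rmult_le_pos; [apply: gprob_ge0 | case: (corr_bounds G)].
apply: Rle_trans (_ : \big[Rplus/0]_(G : graph n m) (gprob rho G * INR #|Om| ^ 2) <= _).
  by apply: ler_sumR => G _; apply: Rmult_le_compat_l; [apply: gprob_ge0 | case: (corr_bounds G)].
have := sum_gprob_le1 k n rho_sum1 m; set S := \big[Rplus/0]_G _ => S_le1.
by move: M0; rewrite -big_distrl -/S /=; nra.
Qed.

Lemma corr_series_exists : exists ecorr : nat -> R, forall n, infinite_sum (corr_term n) (ecorr n).
Proof.
suff cv n : {l | Un_cv (sum_f_R0 (corr_term n)) l}.
  by exists (fun n => proj1_sig (cv n)) => n; case: (cv n).
apply: (Rseries_CV_comp _ (fun m => INR #|Om| ^ 2 * poisson (lambda n) m)).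
  move=> m; have [c0 cM] := cond_exp_corr_bounds n m; have p0 := poisson_ge0 m (lambda_ge0 n).
  by split; rewrite /pterm; nra.
by exists (INR #|Om| ^ 2 * 1); apply: infinite_sum_scal; apply: infinite_sum_poisson.
Qed.

Variables (pmin pmax : R).
Hypothesis pmin_gt0 : 0 < pmin.
Hypothesis pmin_le_pmax : pmin <= pmax.
Hypothesis psi_bounds : forall l t, pmin <= psi l t <= pmax.
Local Notation bp_const := (bp_const Om k pmin pmax).

Lemma bp_rate_ge0 : 0 <= d / INR k * bp_const.
Proof.
apply: Rmult_le_pos; last exact: bp_const_ge0.
by apply: Rmult_le_pos; [lra | apply: Rinv_ge0; apply: pos_INR].
Qed.

Lemma bp_term_succ_le n m dl : (0 < n)%N -> 0 < dl ->
  bp_term n m.+1 <=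
  d / INR k * bp_const * (dl * poisson (lambda n) m + corr_term n m / (2 * (dl * dl * dl))).
Proof.
move=> /leP n0 dl0; have n0R : 0 < INR n by apply: lt_0_INR.
have k0 : 0 < INR k by apply: lt_0_INR; apply/ltP.
have m0 : 0 < INR m.+1 by apply: lt_0_INR; apply/ltP.
have succ : poisson (lambda n) m.+1 = lambda n * poisson (lambda n) m / INR m.+1.
  by rewrite -poisson_succ; field; lra.
apply: Rle_trans (Rmult_le_compat_l _ _ _ (poisson_ge0 m.+1 (lambda_ge0 n))
  (cond_exp_bp_err_le rho_ge0 rho_sum1 psi_gt0 w0 pmin_gt0 pmin_le_pmax psi_bounds n0R m dl0)) _.
by rewrite succ /pterm; right; field; lra.
Qed.

Lemma bp_series_le (e ecorr : nat -> R) n dl :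
  infinite_sum (bp_term n) (e n) -> infinite_sum (corr_term n) (ecorr n) ->
  (0 < n)%N -> 0 < dl ->
  e n <= d / INR k * bp_const * (dl + ecorr n / (2 * (dl * dl * dl))).
Proof.
move=> bp_sum corr_sum n0 dl0.
set A := d / INR k * bp_const; set B := A / (2 * (dl * dl * dl)).
have A0 : 0 <= A := bp_rate_ge0.
have B0 : 0 <= B by apply: Rmult_le_pos => //; apply: Rinv_ge0; apply: Rmult_le_pos; [lra | nra].
have corr_ge0 m : 0 <= corr_term n m.
  by apply: Rmult_le_pos; [apply: poisson_ge0; apply: lambda_ge0 | case: (cond_exp_corr_bounds n m)].
have g_sum := infinite_sum_plus (infinite_sum_scal (A * dl) (infinite_sum_poisson (lambda n)))
  (infinite_sum_scal B corr_sum).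
have -> : A * (dl + ecorr n / (2 * (dl * dl * dl))) = A * dl * 1 + B * ecorr n.
  by rewrite /B /Rdiv; ring.
apply: (infinite_sum_le_shift bp_sum g_sum (bp_term0 n)) => m.
  by apply: Rle_trans (bp_term_succ_le m n0 dl0) _; right; rewrite /B /A /Rdiv; ring.
apply: Rplus_le_le_0_compat; apply: Rmult_le_pos => //; last exact: poisson_ge0 (lambda_ge0 n).
by apply: Rmult_le_pos; lra.
Qed.

End PoissonFactorGraph.

Unset Implicit Arguments.

Theorem lemma10 (Om I : finType) (k : nat) (d : R)
  (psi : I -> {ffun 'I_k -> Om} -> R) (rho : I -> R) :
  (3 <= k)%N -> 0 < d ->
  (forall t s, 0 < psi t s) ->
  (forall t, 0 <= rho t) -> \big[Rplus/0]_(t : I) rho t = 1 ->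
  (forall e : nat -> R,
     (forall n, infinite_sum (pterm d rho (fun n m G => corr psi G) n) (e n)) ->
     Un_cv e 0) ->
  forall e : nat -> R,
    (forall n, infinite_sum (pterm d rho (fun n m G => bp_err psi G) n) (e n)) ->
    Un_cv e 0.
Proof.
move=> k3 d0 psi_gt0 rho_ge0 rho_sum1 corr_cv0 e bp_sum.
have k0 : (0 < k)%N by apply: leq_trans k3.
have e_ge0 n : 0 <= e n := infinite_sum_ge0 (bp_sum n) (bp_term_ge0 psi d0 rho_ge0 n).
case: (posnP #|Om|) => [Om_empty | /card_gt0P[w0 _]].
  apply: Un_cv_ext (Un_cv_const 0) => n.
  by rewrite (bp_series_eq0_of_empty k0 Om_empty (bp_sum n)).
have [pmin [pmax [pmin_gt0 pmin_le_pmax psi_bounds]]] :=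
  pos_fun_bounds (f := fun p : I * {ffun 'I_k -> Om} => psi p.1 p.2) (fun p => psi_gt0 p.1 p.2).
have [ecorr corr_sum] := corr_series_exists d0 psi_gt0 rho_ge0 rho_sum1 w0.
apply: (Un_cv0_of_param_bound (A := d / INR k * bp_const Om k pmin pmax)
  (bp_rate_ge0 Om k d0 pmin_gt0 pmin_le_pmax) (corr_cv0 ecorr corr_sum) e_ge0) => n dl n0 dl0.
exact: (bp_series_le k0 d0 psi_gt0 rho_ge0 rho_sum1 w0 pmin_gt0 pmin_le_pmax
  (fun l t => psi_bounds (l, t)) (bp_sum n) (corr_sum n) n0 dl0).
Qed.
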